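(* Let $X\subset\mathbb{R}^n$ be closed, equal to the closure of its interior, and invariant under translation by a vector $v\in\mathbb{R}^n$ (i.e. $x\in X\Rightarrow x+\lambda v\in X$ for all $\lambda\in\mathbb{R}$), and let $f:X\to\mathbb{R}^n$ be locally Lipschitz, with flow $\varphi_t$ of $\dot x=f(x)$ (solutions unique and maximally defined, defined at least for all $t\ge 0$). Then the flow satisfies $\varphi_t(\xi+\lambda v)=\varphi_t(\xi)+\lambda v$ for all $\lambda\in\mathbb{R}$, all $\xi\in X$ and all admissible $t$ if and only if: for all $x_1,x_2\in X$ with $x_1-x_2\in\operatorname{span}\{v\}$ one has $f(x_1)=f(x_2)$. *)

From HB Require Import structures.
From mathcomp Require Import all_boot all_order all_algebra.
From mathcomp Require Import all_classical all_reals all_analysis.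
Set Implicit Arguments. Unset Strict Implicit. Unset Printing Implicit Defensive.
Import Order.TTheory GRing.Theory Num.Theory.
Import numFieldNormedType.Exports.
Local Open Scope classical_set_scope.
Local Open Scope ring_scope.

(* f : X -> R^n is locally Lipschitz on X (values of f outside X are irrelevant). *)
Definition locally_lipschitz_on {R : realType} {n : nat}
  (X : set 'rV[R]_n) (f : 'rV[R]_n -> 'rV[R]_n) : Prop :=
  forall x, X x -> exists2 r : R, 0 < r & exists L : R,
    forall y z, X y -> X z -> `|y - x| < r -> `|z - x| < r ->
      `|f y - f z| <= L * `|y - z|.

Definition is_solution_on {R : realType} {n : nat}
  (X : set 'rV[R]_n) (f : 'rV[R]_n -> 'rV[R]_n)
  (T : \bar R) (xi : 'rV[R]_n) (y : R -> 'rV[R]_n) : Prop :=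
  y 0 = xi /\
  (forall t : R, 0 <= t -> (t%:E < T)%E -> X (y t)) /\
  ((0%:E < T)%E -> y x @[x --> 0^'+] --> y 0) /\
  (forall t : R, 0 < t -> (t%:E < T)%E -> is_derive t (1 : R) y (f (y t))).

Definition is_forward_flow {R : realType} {n : nat}
  (X : set 'rV[R]_n) (f : 'rV[R]_n -> 'rV[R]_n)
  (phi : R -> 'rV[R]_n -> 'rV[R]_n) : Prop :=
  (forall xi, X xi -> is_solution_on X f +oo%E xi (fun t => phi t xi)) /\
  (forall xi (T : \bar R) (y : R -> 'rV[R]_n), X xi -> is_solution_on X f T xi y ->
     forall t : R, 0 <= t -> (t%:E < T)%E -> y t = phi t xi).

From HB Require Import structures.
From mathcomp Require Import all_boot all_order all_algebra.
From mathcomp Require Import all_classical all_reals all_analysis.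
Import Order.TTheory GRing.Theory Num.Theory.
Import numFieldNormedType.Exports.
Local Open Scope classical_set_scope.
Local Open Scope ring_scope.

(* If the flow commutes with the translation by w, differentiating
   phi_t(xi + w) = phi_t(xi) + w at t > 0 gives f(phi_t(xi + w)) = f(phi_t(xi)),
   and letting t -> 0+ (f is continuous, being locally Lipschitz) gives
   f(xi + w) = f(xi).  Conversely, if f is invariant under the translation,
   then t |-> phi_t(xi) + w solves the equation from xi + w, so it is
   phi_t(xi + w) by uniqueness. *)

Lemma is_derive_addr_cst {R : numFieldType} {V W : normedModType R}
    {y : V -> W} (w : W) {t v : V} {dy : W} :
  is_derive t v y dy -> is_derive t v (fun s => y s + w) dy.
Proof.
by move=> y_dy; apply: is_derive_eq (addr0 dy).
Qed.

Lemma near_eq_is_derive_unique {R : numFieldType} {V W : normedModType R}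
    {y1 y2 : V -> W} {t v : V} {d1 d2 : W} :
  {near t, y1 =1 y2} -> is_derive t v y1 d1 -> is_derive t v y2 d2 -> d1 = d2.
Proof.
move=> y12 y1_d1 y2_d2.
by rewrite -(derive_val (is_derive := y1_d1)) -(derive_val (is_derive := y2_d2));
  exact: near_eq_derive.
Qed.

Lemma locally_lipschitz_on_cvg {R : realType} {n : nat} {X : set 'rV[R]_n}
    {f : 'rV[R]_n -> 'rV[R]_n} {T : Type} {F : set_system T} {FF : Filter F}
    {y : T -> 'rV[R]_n} {x : 'rV[R]_n} :
  locally_lipschitz_on X f -> X x -> (\forall t \near F, X (y t)) ->
  y @ F --> x -> f (y t) @[t --> F] --> f x.
Proof.
move=> flip Xx Xy y_x; have [r r0 [L fL]] := flip x Xx.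
have L'0 : 0 < `|L| + 1 by rewrite ltr_wpDl.
apply/cvgrPdist_lt => e e0.
have de0 : 0 < Num.min r (e / (`|L| + 1)) by rewrite lt_min r0 divr_gt0.
move/cvgrPdist_lt: y_x => /(_ _ de0) y_near.
near=> t.
have : `|x - y t| < Num.min r (e / (`|L| + 1)) by near: t.
rewrite lt_min => /andP[xyr xye].
have Xyt : X (y t) by near: t.
have := fL x (y t) Xx Xyt; rewrite subrr normr0 distrC => /(_ r0 xyr) fxy.
apply: (le_lt_trans fxy); apply: (@le_lt_trans _ _ ((`|L| + 1) * `|x - y t|)).
  by rewrite ler_wpM2r // (le_trans (ler_norm L)) // lerDl.
by rewrite -ltr_pdivlMl // mulrC.
Unshelve. all: by end_near.
Qed.

Section FlowTranslation.
Context {R : realType} {n : nat} {X : set 'rV[R]_n}.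
Context {f : 'rV[R]_n -> 'rV[R]_n} {phi : R -> 'rV[R]_n -> 'rV[R]_n}.
Hypothesis phi_flow : is_forward_flow X f phi.

Lemma flow_in {xi : 'rV[R]_n} {t : R} : X xi -> 0 <= t -> X (phi t xi).
Proof.
by move=> Xxi t0; have [_ [Xphi _]] := phi_flow.1 xi Xxi; exact: Xphi t0 (ltry t).
Qed.

Lemma flow_is_derive {xi : 'rV[R]_n} {t : R} :
  X xi -> 0 < t -> is_derive t 1 (phi^~ xi) (f (phi t xi)).
Proof.
by move=> Xxi t0; have [_ [_ [_ phi']]] := phi_flow.1 xi Xxi; exact: phi' t0 (ltry t).
Qed.

Lemma flow_cvg0 {xi : 'rV[R]_n} : X xi -> phi t xi @[t --> 0^'+] --> xi.
Proof.
move=> Xxi; have [phi0 [_ [phi_cvg _]]] := phi_flow.1 xi Xxi.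
by rewrite -[X in _ --> X]phi0; exact: phi_cvg (ltry 0).
Qed.

Lemma flow_f_cvg0 {xi : 'rV[R]_n} :
  locally_lipschitz_on X f -> X xi -> f (phi t xi) @[t --> 0^'+] --> f xi.
Proof.
move=> flip Xxi; apply: (locally_lipschitz_on_cvg flip Xxi _ (flow_cvg0 Xxi)).
near=> t; apply: flow_in Xxi _; apply/ltW; near: t; exact: nbhs_right_gt.
Unshelve. all: by end_near.
Qed.

Context {w : 'rV[R]_n}.
Hypothesis X_addw : forall x, X x -> X (x + w).

Lemma is_solution_addw {T : \bar R} {xi : 'rV[R]_n} {y : R -> 'rV[R]_n} :
  (forall x, X x -> f (x + w) = f x) ->
  is_solution_on X f T xi y -> is_solution_on X f T (xi + w) (fun t => y t + w).
Proof.
move=> f_addw [y0 [Xy [y_cvg y_derive]]]; split; first by rewrite y0.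
split; first by move=> t t0 tT; exact: X_addw _ (Xy t t0 tT).
split; first by move=> T0; exact: cvgD (y_cvg T0) (cvg_cst w).
move=> t t0 tT; rewrite f_addw; last exact: Xy (ltW t0) tT.
exact: is_derive_addr_cst (y_derive t t0 tT).
Qed.

Lemma flow_addw (t : R) (xi : 'rV[R]_n) :
  (forall x, X x -> f (x + w) = f x) -> 0 <= t -> X xi ->
  phi t (xi + w) = phi t xi + w.
Proof.
move=> f_addw t0 Xxi.
have sol := is_solution_addw f_addw (phi_flow.1 xi Xxi).
by rewrite (phi_flow.2 _ _ _ (X_addw _ Xxi) sol t t0 (ltry t)).
Qed.

Lemma flow_addw_f_eq (xi : 'rV[R]_n) :
  locally_lipschitz_on X f -> X xi ->
  (forall t, 0 <= t -> phi t (xi + w) = phi t xi + w) -> f (xi + w) = f xi.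
Proof.
move=> flip Xxi phi_addw.
have f_eq t : 0 < t -> f (phi t (xi + w)) = f (phi t xi).
  move=> t0; apply: near_eq_is_derive_unique (flow_is_derive (X_addw _ Xxi) t0)
    (is_derive_addr_cst w (flow_is_derive Xxi t0)).
  near=> s; apply: phi_addw; apply/ltW; near: s; exact: lt_nbhsr.
apply: (cvg_unique _ (flow_f_cvg0 flip (X_addw _ Xxi))) => //=.
apply: cvg_trans _ (flow_f_cvg0 flip Xxi); apply: near_eq_cvg.
near=> t; apply/esym/f_eq; near: t; exact: nbhs_right_gt.
Unshelve. all: by end_near.
Qed.

End FlowTranslation.

Theorem lemma1 (R : realType) (n : nat) (X : set 'rV[R]_n) (v : 'rV[R]_n)
  (f : 'rV[R]_n -> 'rV[R]_n) (phi : R -> 'rV[R]_n -> 'rV[R]_n) :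
  closed X ->
  X = closure (X°) ->
  (forall x (lam : R), X x -> X (x + lam *: v)) ->
  locally_lipschitz_on X f ->
  is_forward_flow X f phi ->
  (forall (t : R) (xi : 'rV[R]_n) (lam : R), 0 <= t -> X xi ->
      phi t (xi + lam *: v) = phi t xi + lam *: v)
  <->
  (forall x1 x2 : 'rV[R]_n, X x1 -> X x2 ->
      (exists lam : R, x1 - x2 = lam *: v) -> f x1 = f x2).
Proof.
move=> _ _ X_addv flip phi_flow; split.
- move=> phi_addv x1 x2 X1 X2 [lam x12].
  have -> : x1 = x2 + lam *: v by rewrite -x12 addrC subrK.
  apply: (flow_addw_f_eq phi_flow (fun x => X_addv x lam) x2 flip X2) => t t0.
  exact: phi_addv.
- move=> f_addv t xi lam t0 Xxi.
  apply: (flow_addw phi_flow (fun x => X_addv x lam)) => // x Xx.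
  by apply: f_addv => //; [exact: X_addv | exists lam; rewrite addrC addKr].
Qed.
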